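(* Let $c>0$, $f_s>0$, let $M,N,K\ge1$ be integers, $T_{\max}=(N-1)/f_s$, and $\bm{r}^{\mathrm{mic}}_1,\dots,\bm{r}^{\mathrm{mic}}_M\in\mathbb{R}^3$ with $E_M=\{\bm{r}^{\mathrm{mic}}_m\}$. Let $\kappa=\kappa^{\mathrm{lp}}$ where $\kappa^{\mathrm{lp}}(t)=\operatorname{sinc}(\pi f_s t)$, with $\operatorname{sinc}(u)=\sin(u)/u$ for $u\ne0$ and $\operatorname{sinc}(0)=1$. Then $\Gamma^K$ is amplitude lower-bounded, i.e. there is $C>0$ with $\|\Gamma^K(\bm{a},\bm{r})\|_2\ge C\sum_{k=1}^K a_k$ for all $(\bm{a},\bm{r})\in\mathbb{R}_+^K\times\mathscr{C}^K$.
   Context: $\mathbb{R}_+=[0,+\infty)$, $\|\cdot\|_2$ is the Euclidean norm. For $\bm{r}\in\mathbb{R}^3\setminus E_M$, $\gamma(\bm{r})\in\mathbb{R}^{MN}$ has components $\gamma_{m,n}(\bm{r})=\dfrac{\kappa\big(n/f_s-\|\bm{r}-\bm{r}^{\mathrm{mic}}_m\|_2/c\big)}{4\pi\|\bm{r}-\bm{r}^{\mathrm{mic}}_m\|_2}$, $1\le m\le M$, $0\le n\le N-1$. $\mathscr{C}=\bigcap_{m=1}^M\overline{B(\bm{r}^{\mathrm{mic}}_m,cT_{\max})}\setminus E_M$. $\Gamma^K(\bm{a},\bm{r})=\sum_{k=1}^K a_k\gamma(\bm{r}_k)$. *)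

From mathcomp Require Import all_boot all_order all_algebra.
From mathcomp Require Import reals trigo.
Set Implicit Arguments. Unset Strict Implicit. Unset Printing Implicit Defensive.
Import Order.TTheory GRing.Theory Num.Theory.
Local Open Scope ring_scope.

Section Defs.
Variable R : realType.

Definition sinc (u : R) : R := if u == 0 then 1 else sin u / u.

Definition kappa_lp (fs t : R) : R := sinc (pi * fs * t).

Definition norm2_3 (v : 'rV[R]_3) : R := Num.sqrt (\sum_(i < 3) (v 0 i) ^+ 2).

Definition gamma_mn (kappa : R -> R) (c fs : R) (M : nat) (mic : 'I_M -> 'rV[R]_3)
  (m : 'I_M) (n : nat) (r : 'rV[R]_3) : R :=
  kappa (n%:R / fs - norm2_3 (r - mic m) / c) / (4 * pi * norm2_3 (r - mic m)).

Definition Tmax (fs : R) (N : nat) : R := (N.-1)%:R / fs.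

Definition in_Cset (c fs : R) (M N : nat) (mic : 'I_M -> 'rV[R]_3) (r : 'rV[R]_3) : Prop :=
  (forall m : 'I_M, norm2_3 (r - mic m) <= c * Tmax fs N) /\
  (forall m : 'I_M, r <> mic m).

Definition Gamma_norm (kappa : R -> R) (c fs : R) (M N K : nat) (mic : 'I_M -> 'rV[R]_3)
  (a : 'I_K -> R) (r : 'I_K -> 'rV[R]_3) : R :=
  Num.sqrt (\sum_(m < M) \sum_(n < N)
     (\sum_(k < K) a k * gamma_mn kappa c fs mic m n (r k)) ^+ 2).

End Defs.

(* Fix the first microphone.  For a source at distance D from it, the
   corresponding block of gamma(r) is (sinc (pi (n - t)))_n / (4 pi D) with
   t = fs D / c in [0, N - 1].  If t is an integer, sum_n sinc (pi (n - t))
   is 1.  Otherwise t = j + d with 0 < d < 1, sin (pi (n - t)) = +- sin (pi d),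
   and the two halves of the sum are sin (pi d) / pi times alternating harmonic
   sums bounded below by 1 / (x (x + 1)); together with
   sin (pi d) >= d (1 - d) this gives sum_n sinc (pi (n - t)) >= 1 / (2 pi).
   As the amplitudes are nonnegative, the block sum of Gamma is then at least
   B * sum_k a_k with B = 1 / (8 pi^2 (c Tmax + 1)), while a sum of N entries
   is at most N times the Euclidean norm. *)

From mathcomp Require Import all_boot all_order all_algebra.
From mathcomp Require Import reals trigo.
From mathcomp Require Import ring lra zify.
Import Order.TTheory GRing.Theory Num.Theory.
Local Open Scope ring_scope.

Section JordanBound.
Variable R : realType.
Implicit Types y : R.

Lemma sin_mulr2n_le y : 0 <= sin y -> sin (y *+ 2) <= sin y *+ 2.
Proof.
move=> sy0; rewrite sin_mulr2n lerMn2r /=.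
by rewrite -[leRHS]mul1r ler_wpM2r // cos_le1.
Qed.

Lemma sin_pi_quarter_ge : 1 / 2 <= sin (pi / 4 : R).
Proof.
have pi0 := pi_gt0 R.
have s0 : 0 <= sin (pi / 4 : R) by apply: sin_ge0_pi; apply/andP; split; lra.
have := sin_mulr2n_le _ s0.
have -> : (pi / 4 : R) *+ 2 = pi / 2 by rewrite -mulr_natr; field.
rewrite sin_pihalf mulr2n; lra.
Qed.

(* Doubling: [sin y >= sin (2y) / 2], so it suffices to treat [y] in
   [(pi/4, pi/2]], where [sin y >= sin (pi/4) >= 1/2]. *)
Lemma sin_ge_div_pi y : 0 < y <= pi / 2 -> y / pi <= sin y.
Proof.
move=> /andP[y0 ypi]; have pi0 := pi_gt0 R.
have base (z : R) : pi / 4 < z <= pi / 2 -> z / pi <= sin z.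
  move=> /andP[z_gt z_le]; have quarter := sin_pi_quarter_ge.
  have : sin (pi / 4) < sin z.
    by rewrite ltr_sin ?in_itv /= ?z_gt ?z_le ?andbT //; [apply/andP; split|]; lra.
  by rewrite ler_pdivrMr //; nra.
have [k yk] : exists k, pi / 4 < y * 2 ^+ k.
  set k := Num.trunc (pi / (4 * y)); exists k.+1.
  have /andP[_ truncS] := truncn_itv (ltW (divr_gt0 pi0 (mulr_gt0 (ltr0n R 4) y0))).
  have k_lt_2k : k.+1%:R <= 2 ^+ k.+1 :> R by rewrite -natrX ler_nat ltnW // ltn_expl.
  rewrite ltr_pdivrMr in truncS; last by lra.
  rewrite ltr_pdivrMr; nra.
elim: k y y0 ypi yk => [|k IH] y y0 ypi.
  by rewrite expr0 mulr1 => yk; apply: base; apply/andP; split.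
rewrite exprS mulrA => yk.
have [y_le|y_gt] := lerP y (pi / 4); last by apply: base; apply/andP; split.
have y2 : y *+ 2 = y * 2 by lra.
have h2y : y *+ 2 / pi <= sin (y *+ 2) by apply: IH; rewrite y2 //; lra.
have : sin (y *+ 2) <= sin y *+ 2 by apply/sin_mulr2n_le/sin_ge0_pi/andP; split; lra.
move: h2y; rewrite y2 mulrAC; set q := y / pi; lra.
Qed.

Lemma sin_piB y : sin (pi - y) = sin y.
Proof. by rewrite sinB sinpi cospi mul0r sub0r mulN1r opprK. Qed.

Lemma sin_pi_mul_ge (x : R) : 0 < x < 1 -> x * (1 - x) <= sin (pi * x).
Proof.
move=> /andP[x0 x1]; have pi0 := pi_gt0 R.
have sin_ge (z : R) : 0 < z <= 1 / 2 -> z <= sin (pi * z).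
  move=> /andP[z0 z_le]; rewrite -[leLHS](mulKf (lt0r_neq0 pi0)) mulrC.
  by apply: sin_ge_div_pi; apply/andP; split; nra.
have [x_le|x_gt] := lerP x (1 / 2).
  by apply: le_trans (sin_ge _ _); [nra | apply/andP; split].
have -> : pi * x = pi - pi * (1 - x) by ring.
by rewrite sin_piB; apply: le_trans (sin_ge _ _); [nra | apply/andP; split; lra].
Qed.

End JordanBound.

Section SincSums.
Variable R : realType.

Definition alt_harmonic (L : nat) (x : R) : R :=
  \sum_(i < L.+1) (-1) ^+ i / (x + i%:R).

Lemma alt_harmonicS (L : nat) (x : R) :
  alt_harmonic L.+1 x = 1 / x - alt_harmonic L (x + 1).
Proof.
rewrite /alt_harmonic big_ord_recl expr0 addr0 -sumrN; congr (_ + _).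
apply: eq_bigr => i _.
by rewrite exprS mulN1r mulNr lift0 -natr1 addrA addrAC.
Qed.

Lemma alt_harmonic_bounds (L : nat) (x : R) :
  0 < x -> 1 / x - 1 / (x + 1) <= alt_harmonic L x <= 1 / x.
Proof.
elim: L x => [|L IH] x x0.
  rewrite /alt_harmonic big_ord1 expr0 addr0 lexx andbT gerBl.
  by rewrite divr_ge0 // ltW // ltr_wpDr.
have /andP[lo hi] := IH (x + 1) (ltr_wpDr ler01 x0).
have : 1 / (x + 1 + 1) <= 1 / (x + 1) by rewrite !div1r lef_pV2 ?posrE; lra.
by rewrite alt_harmonicS => ?; apply/andP; split; lra.
Qed.

Lemma sincN (u : R) : sinc (- u) = sinc u.
Proof. by rewrite /sinc oppr_eq0 sinN invrN mulrNN. Qed.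

Lemma sin_pi_natD (i : nat) (y : R) : sin (pi * i%:R + y) = (-1) ^+ i * sin y.
Proof. by rewrite addrC mulr_natr (alternatingn (@sinDpi R)). Qed.

Lemma sinc_pi_nat (m : nat) : sinc (pi * m%:R : R) = (m == 0)%:R.
Proof.
case: m => [|m]; first by rewrite mulr0 /sinc eqxx.
rewrite /sinc mulf_eq0 pnatr_eq0 (negbTE (lt0r_neq0 (pi_gt0 R))) orbF.
rewrite -[pi * _]addr0 sin_pi_natD sin0 mulr0 mul0r.
exact: esym (mulr0n 1).
Qed.

Lemma sinc_pi_natB (n j : nat) : sinc (pi * (n%:R - j%:R) : R) = (n == j)%:R.
Proof.
have [j_le|n_lt] := leqP j n.
  by rewrite -(natrB _ j_le) sinc_pi_nat subn_eq0 eqn_leq j_le andbT.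
rewrite -opprB -(natrB _ (ltnW n_lt)) mulrN sincN sinc_pi_nat subn_eq0.
by rewrite leqNgt n_lt ltn_eqF.
Qed.

Lemma sinc_pi_natD (i : nat) (x : R) : 0 < x ->
  sinc (pi * (i%:R + x)) = sin (pi * x) / pi * ((-1) ^+ i / (x + i%:R)).
Proof.
move=> x0; have pi0 := pi_gt0 R.
have ix0 : 0 < i%:R + x by rewrite ltr_wpDl ?ler0n.
rewrite /sinc mulf_eq0 (gt_eqF pi0) (gt_eqF ix0) orbF.
rewrite mulrDr sin_pi_natD [x + _]addrC.
by rewrite -mulrDr invfM; ring.
Qed.

Lemma sum_sinc_pi_natD (L : nat) (x : R) : 0 < x ->
  \sum_(i < L.+1) sinc (pi * (i%:R + x)) = sin (pi * x) / pi * alt_harmonic L x.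
Proof.
move=> x0; rewrite /alt_harmonic mulr_sumr.
by apply: eq_bigr => i _; rewrite sinc_pi_natD.
Qed.

Lemma sum_sinc_pi_natD_ge (L : nat) (x : R) : 0 < x < 1 ->
  (1 - x) / (pi *+ 2) <= \sum_(i < L.+1) sinc (pi * (i%:R + x)).
Proof.
move=> x01; have /andP[x0 x1] := x01.
have x1x0 : 0 < x * (1 - x) by nra.
have alt_lo : (x * (1 - x))^-1 * ((1 - x) / (x + 1)) <= alt_harmonic L x.
  have /andP[lo _] := alt_harmonic_bounds L x x0.
  suff -> : (x * (1 - x))^-1 * ((1 - x) / (x + 1)) = 1 / x - 1 / (x + 1) by [].
  by field; rewrite !gt_eqF //; lra.
have half_le : (1 - x) / 2 <= (1 - x) / (x + 1).
  by rewrite ler_wpM2l ?lef_pV2 ?posrE; lra.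
rewrite sum_sinc_pi_natD // -mulr_natr invfM mulrA [leLHS]mulrAC [leRHS]mulrAC.
rewrite ler_pM2r ?invr_gt0 ?pi_gt0 //.
apply: le_trans half_le _; rewrite -[leLHS](mulVKf (lt0r_neq0 x1x0)).
by apply: ler_pM; [exact: ltW | rewrite mulr_ge0 ?invr_ge0 ?divr_ge0; lra | exact: sin_pi_mul_ge |].
Qed.

Lemma sum_sinc_pi_natB (N j : nat) : (j < N)%N ->
  \sum_(n < N) sinc (pi * (n%:R - j%:R) : R) = 1.
Proof.
move=> jN; rewrite (bigD1 (Ordinal jN)) //= sinc_pi_natB eqxx big1 ?addr0 //.
move=> n /eqP n_neq_j; rewrite sinc_pi_natB.
suff /negbTE -> : (n : nat) != j by [].
by apply/eqP => eq_nj; apply: n_neq_j; exact: val_inj.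
Qed.

Lemma sum_sinc_pi_split (N j : nat) (d : R) : (j.+1 < N)%N ->
  \sum_(n < N) sinc (pi * (n%:R - (j%:R + d))) =
  \sum_(i < j.+1) sinc (pi * (i%:R + d)) +
  \sum_(i < (N - j.+2).+1) sinc (pi * (i%:R + (1 - d))).
Proof.
move=> jN.
rewrite -(big_mkord xpredT (fun n => sinc (pi * (n%:R - (j%:R + d))))).
rewrite (big_cat_nat (leq0n j.+1) (ltnW jN)) /=.
congr (_ + _).
  rewrite big_nat_rev big_mkord; apply: eq_bigr => i _.
  rewrite add0n subSS (natrB _ (leq_ord i)) -sincN; congr (sinc _); ring.
rewrite -{1}[j.+1]add0n big_addn -subSn // subSS big_mkord.
apply: eq_bigr => i _; rewrite natrD -natr1; congr (sinc _); ring.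
Qed.

Lemma sum_sinc_pi_ge (N : nat) (t : R) : (0 < N)%N -> 0 <= t <= (N.-1)%:R ->
  1 / (pi *+ 2) <= \sum_(n < N) sinc (pi * (n%:R - t)).
Proof.
move=> N0 /andP[t0 tN]; have pi2 := pi_ge2 R.
have /andP[jt tj] := truncn_itv t0; set j := Num.trunc t in jt tj.
have jN : (j < N)%N by move: (le_trans jt tN); rewrite ler_nat; lia.
have [->|t_neq_j] := eqVneq t j%:R.
  by rewrite sum_sinc_pi_natB // ler_pdivrMr ?mul1r; lra.
set d := t - j%:R.
have d0 : 0 < d by rewrite lt_neqAle eq_sym subr_eq0 t_neq_j subr_ge0.
have d1 : d < 1 by move: tj; rewrite -natr1 /d; lra.
have jN1 : (j.+1 < N)%N.
  suff : j%:R < (N.-1)%:R :> R by rewrite ltr_nat; lia.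
  by move: tN; rewrite /d; lra.
have -> : t = j%:R + d by rewrite /d addrC subrK.
rewrite sum_sinc_pi_split //.
have -> : 1 / (pi *+ 2) = (1 - d) / (pi *+ 2) + (1 - (1 - d)) / (pi *+ 2).
  by rewrite -mulrDl addrC subrK.
by apply: lerD; apply: sum_sinc_pi_natD_ge; apply/andP; split; lra.
Qed.
End SincSums.

Section ArrayResponse.
Variable R : realType.

Lemma ler_sqrt_sum_sqr (I J : finType) (x : I -> J -> R) (i : I) (j : J) :
  x i j <= Num.sqrt (\sum_i0 \sum_j0 x i0 j0 ^+ 2).
Proof.
apply: le_trans (ler_norm _) _; rewrite -sqrtr_sqr ler_wsqrtr //.
rewrite (bigD1 i) //= (bigD1 j) //= -addrA lerDl.
by apply: addr_ge0; apply: sumr_ge0 => *; rewrite ?sqr_ge0 ?sumr_ge0 // => *; rewrite sqr_ge0.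
Qed.

Lemma sum_le_sqrt_sum_sqr (M N : nat) (x : 'I_M -> 'I_N -> R) (m : 'I_M) :
  \sum_(n < N) x m n <= N%:R * Num.sqrt (\sum_(m0 < M) \sum_(n < N) x m0 n ^+ 2).
Proof.
rewrite mulr_natl -[N in _ *+ N]card_ord -sumr_const.
by apply: ler_sum => n _; apply: ler_sqrt_sum_sqr.
Qed.

Lemma norm2_3_gt0 (v : 'rV[R]_3) : v != 0 -> 0 < norm2_3 v.
Proof.
move=> v_neq0; have sq0 (k : 'I_3) : 0 <= v 0 k ^+ 2 := sqr_ge0 _.
rewrite /norm2_3 sqrtr_gt0 lt_neqAle eq_sym sumr_ge0 // andbT.
apply: contra v_neq0 => /eqP/psumr_eq0P v0; apply/eqP/matrixP => i j.
by rewrite ord1 mxE; apply/eqP; rewrite -sqrf_eq0 v0.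
Qed.

Lemma gamma_lp_sinc (c fs : R) (M : nat) (mic : 'I_M -> 'rV[R]_3) m n r :
  fs != 0 ->
  gamma_mn (kappa_lp fs) c fs mic m n r =
  sinc (pi * (n%:R - fs * norm2_3 (r - mic m) / c)) / (4 * pi * norm2_3 (r - mic m)).
Proof.
move=> fs_neq0; rewrite /gamma_mn /kappa_lp; congr (sinc _ / _).
rewrite -mulrA; congr (pi * _).
by rewrite mulrBr mulrCA (divff fs_neq0) mulr1 mulrA.
Qed.

(* The [+ 1] keeps the constant positive when [Tmax fs N = 0], where the set
   of admissible sources is empty. *)
Lemma sum_gamma_lp_ge (c fs : R) (M N : nat) (mic : 'I_M -> 'rV[R]_3) m r :
  0 < c -> 0 < fs -> (0 < N)%N -> in_Cset c fs N mic r ->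
  1 / (pi *+ 2) / (4 * pi * (c * Tmax fs N + 1)) <=
  \sum_(n < N) gamma_mn (kappa_lp fs) c fs mic m n r.
Proof.
move=> c0 fs0 N0 [r_in r_ne]; have pi0 := pi_gt0 R.
set D := norm2_3 (r - mic m).
have D0 : 0 < D by apply: norm2_3_gt0; rewrite subr_eq0; apply/eqP.
have DT : D <= c * Tmax fs N := r_in m.
have t_itv : 0 <= fs * D / c <= (N.-1)%:R.
  have -> : (N.-1)%:R = fs * (c * Tmax fs N) / c.
    by rewrite /Tmax; field; rewrite !gt_eqF.
  apply/andP; split; first by rewrite divr_ge0 ?mulr_ge0 // ltW.
  by rewrite ler_pM2r ?invr_gt0 // ler_pM2l.
rewrite (eq_bigr _ (fun (n : 'I_N) _ => gamma_lp_sinc c fs M mic m n r (lt0r_neq0 fs0))).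
rewrite -mulr_suml.
have cT0 : 0 <= c * Tmax fs N := le_trans (ltW D0) DT.
have pi4 : 0 < 4 * pi :> R by rewrite mulr_gt0.
have inv2pi0 : 0 <= 1 / (pi *+ 2) :> R := divr_ge0 ler01 (mulrn_wge0 2 (ltW pi0)).
apply: ler_pM => //.
- by rewrite invr_ge0 mulr_ge0 ?addr_ge0 // ltW.
- exact: sum_sinc_pi_ge.
have cT1 : 0 < c * Tmax fs N + 1 by lra.
by rewrite lef_pV2 ?posrE ?(mulr_gt0 pi4) // ler_pM2l // -/D; lra.
Qed.

End ArrayResponse.

Theorem corollary1 (R : realType) (c fs : R) (M N K : nat)
  (mic : 'I_M -> 'rV[R]_3) :
  0 < c -> 0 < fs -> (1 <= M)%N -> (1 <= N)%N -> (1 <= K)%N ->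
  exists C : R, 0 < C /\
    forall (a : 'I_K -> R) (r : 'I_K -> 'rV[R]_3),
      (forall k, 0 <= a k) ->
      (forall k, in_Cset c fs N mic (r k)) ->
      C * (\sum_(k < K) a k) <= Gamma_norm (kappa_lp fs) c fs N mic a r.
Proof.
move=> c0 fs0 M0 N0 _; have pi0 := pi_gt0 R.
set B := 1 / (pi *+ 2) / (4 * pi * (c * Tmax fs N + 1)).
have B0 : 0 < B.
  have cT0 : 0 <= c * Tmax fs N := mulr_ge0 (ltW c0) (divr_ge0 (ler0n _ _) (ltW fs0)).
  apply: divr_gt0; first by rewrite divr_gt0 // mulrn_wgt0.
  by rewrite !mulr_gt0 // ltr_wpDl.
exists (B / N%:R); split; first by rewrite divr_gt0 ?ltr0n.
move=> a r a0 r_in; set m0 : 'I_M := Ordinal M0.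
rewrite mulrAC ler_pdivrMr ?ltr0n // [leRHS]mulrC.
pose x (m : 'I_M) (n : 'I_N) := \sum_(k < K) a k * gamma_mn (kappa_lp fs) c fs mic m n (r k).
apply: le_trans (@sum_le_sqrt_sum_sqr R M N x m0).
rewrite /x exchange_big mulr_sumr; apply: ler_sum => k _.
rewrite -mulr_sumr mulrC ler_wpM2l //.
exact: sum_gamma_lp_ge.
Qed.
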